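(* Let $\widetilde\Delta$ be a graph without isolated vertices, let $\ell:D(\widetilde\Delta)\to N$ be a voltage assignment, and let $\widetilde\Gamma$ be the lift of $\widetilde\Delta$ with respect to $\ell$. Then the following are equivalent: (i) for all $u,v,w\in V(\widetilde\Delta)$ with $u\sim v$ and $v\perp w$ we have $\ell(w,u)=\ell(w,v)$; (ii) for all $(u,m),(v,n)\in V(\widetilde\Gamma)$, we have $(u,m)\sim(v,n)$ if and only if $m=n$ and $u\sim v$.
   Context: Graphs are simple and undirected; $u\perp v$ denotes adjacency and $D(\Delta)$ is the set of darts (ordered pairs of adjacent vertices). A voltage assignment is a map $\ell:D(\Delta)\to N$ into a group with $\ell(u,v)=\ell(v,u)^{-1}$; the lift has vertex set $V(\Delta)\times N$ with $(u,m)\perp(v,n)$ iff $u\perp v$ and $\ell(u,v)=mn^{-1}$. In any graph, $u\sim v$ means that $u$ and $v$ have the same set of neighbours. *)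

From mathcomp Require Import all_boot all_fingroup.
Set Implicit Arguments. Unset Strict Implicit. Unset Printing Implicit Defensive.
Local Open Scope group_scope.

Definition simple_graph (V : finType) (e : rel V) : Prop :=
  symmetric e /\ irreflexive e.

Definition no_isolated (V : finType) (e : rel V) : Prop :=
  forall u, exists v, e u v.

(* Voltage assignment: defined on darts (u,v) with u adjacent to v;
   values on non-darts are irrelevant. *)
Definition voltage (V : finType) (e : rel V) (N : finGroupType)
  (l : V -> V -> N) : Prop :=
  forall u v, e u v -> l u v = (l v u)^-1.

Definition lift_adj (V : finType) (e : rel V) (N : finGroupType)
  (l : V -> V -> N) : rel (V * N) :=
  fun x y => e x.1 y.1 && (l x.1 y.1 == x.2 * y.2^-1).

(* x ~ y : same set of neighbours. *)
Definition same_nbhd (T : Type) (r : rel T) (x y : T) : Prop :=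
  forall z, r x z = r y z.

From mathcomp Require Import all_boot all_fingroup.
Local Open Scope group_scope.

(* If (u, m) and (v, n) are twins (have the same neighbourhood) in the lift,
   then every neighbour w of u is a neighbour of v, and comparing the darts
   to the lifted neighbour (w, l(u,w)^-1 m) gives l(v,w) = n m^-1 l(u,w).
   Condition (i) says exactly that l(v,w) = l(u,w), which forces m = n as
   soon as u has a neighbour; conversely twins (u, 1), (v, 1) of the lift
   recover condition (i). *)

Section Lift.

Variables (V : finType) (e : rel V) (N : finGroupType) (l : V -> V -> N).

Lemma lift_adjE u m w k :
  lift_adj e l (u, m) (w, k) = e u w && (l u w == m * k^-1).
Proof. by []. Qed.

Lemma lift_adj_dart {u} m {w} :
  e u w -> lift_adj e l (u, m) (w, (l u w)^-1 * m).
Proof. by move=> euw; rewrite lift_adjE euw invMg invgK mulgA mulgV mul1g eqxx. Qed.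

Lemma same_nbhd_sym {T : Type} {r : rel T} {x y} :
  same_nbhd r x y -> same_nbhd r y x.
Proof. by move=> rxy z; rewrite rxy. Qed.

Lemma lift_twin_dart {u m v n w} :
  same_nbhd (lift_adj e l) (u, m) (v, n) -> e u w ->
  e v w /\ l v w = n * m^-1 * l u w.
Proof.
move=> twin euw; have := lift_adj_dart m euw.
rewrite twin lift_adjE => /andP[evw /eqP ->].
by rewrite invMg invgK mulgA.
Qed.

Lemma lift_twin_base {u m v n} :
  same_nbhd (lift_adj e l) (u, m) (v, n) -> same_nbhd e u v.
Proof.
move=> twin w; apply/idP/idP => [euw | evw].
- by case: (lift_twin_dart twin euw).
- by case: (lift_twin_dart (same_nbhd_sym twin) evw).
Qed.

Hypothesis voltage_l : voltage e l.

Section TwinCompatible.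

Hypothesis twin_compatible :
  forall u v w, same_nbhd e u v -> e v w -> l w u = l w v.

Lemma twin_voltage_out {u v w} : same_nbhd e u v -> e v w -> l u w = l v w.
Proof.
move=> twin evw; have euw : e u w by rewrite twin.
by rewrite (voltage_l _ _ euw) (voltage_l _ _ evw) (twin_compatible _ _ _ twin evw).
Qed.

Lemma lift_twin_fibre {u m v n} :
  no_isolated e -> same_nbhd (lift_adj e l) (u, m) (v, n) -> m = n.
Proof.
move=> noi twin; have [w euw] := noi u.
have [evw lvw] := lift_twin_dart twin euw.
have luv := twin_voltage_out (lift_twin_base twin) evw.
have : n * m^-1 = 1 by apply: (mulIg (l u w)); rewrite mul1g -lvw luv.
by move/eqP; rewrite -eq_mulgV1 eq_sym => /eqP.
Qed.

Lemma lift_twin_of_twin u v m :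
  same_nbhd e u v -> same_nbhd (lift_adj e l) (u, m) (v, m).
Proof.
move=> twin [w k]; rewrite !lift_adjE twin.
by case evw: (e v w) => //=; rewrite (twin_voltage_out twin evw).
Qed.

End TwinCompatible.

Lemma twin_compatible_of_lift u v w :
  same_nbhd (lift_adj e l) (u, 1) (v, 1) -> e v w -> l w u = l w v.
Proof.
move=> twin evw; have euw : e u w by rewrite (lift_twin_base twin).
have [_] := lift_twin_dart (same_nbhd_sym twin) evw.
rewrite invg1 mulg1 mul1g => luw.
by rewrite -[l w u]invgK -(voltage_l _ _ euw) luw (voltage_l _ _ evw) invgK.
Qed.

End Lift.

Theorem lemma2p4 (V : finType) (e : rel V) (N : finGroupType)
  (l : V -> V -> N) :
  simple_graph e -> no_isolated e -> voltage e l ->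
  ((forall u v w : V, same_nbhd e u v -> e v w -> l w u = l w v) <->
   (forall (u : V) (m : N) (v : V) (n : N),
      same_nbhd (lift_adj e l) (u, m) (v, n) <-> (m = n /\ same_nbhd e u v))).
Proof.
move=> _ noi vol; split=> [compat u m v n | lift_twins u v w twin].
- split=> [twin | [<- twin]].
  + by split; [exact: lift_twin_fibre twin | exact: lift_twin_base twin].
  + exact: lift_twin_of_twin.
- by apply: twin_compatible_of_lift => //; apply/lift_twins.
Qed.
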